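(* Let $G_M$ be a maximal reducible graph and let $T_M$ be a persistent phylogeny solving $G_M$. Then $T_M$ is either a line-tree or a branch-tree.
   Context: Persistent phylogeny. Let $M$ be a binary matrix with rows indexed by species $S$ and columns by characters $C=\{c_1,\dots,c_m\}$, and $A\subseteq C$ (active characters). A persistent phylogeny for $(M,A)$ is a rooted tree $T$ whose nodes $x$ carry vectors $l_x\in\{0,1\}^m$ (the state of $x$) such that: the root $r$ has $l_r[j]=1$ iff $c_j\in A$; each edge is labelled $c_j^+$ for each character changing from 0 to 1 on it and $c_j^-$ for each changing from 1 to 0; each character changes state on at most two edges, and if on two, they lie on one root-to-leaf path with the gain $c_j^+$ closer to the root than the loss $c_j^-$; each row of $M$ equals $l_x$ for some node $x$. Red-black graphs. A red-black graph on species $S$ and characters $C$ is a bipartite graph on $S\cup C$ with red or black edges, each character incident only to black edges (inactive) or only to red edges (active). Its associated matrix has $M[s,c]=1$ iff $(s,c)$ is black, or $c$ is active and $(s,c)$ is not an edge; a tree solving the graph is a persistent phylogeny for (associated matrix, set of active characters). $S(c)=\{s:M[s,c]=1\}$. Realizing $c^+$ ($c$ inactive): with $D(c)$ the species of the component of $c$, add red edges from $c$ to $D(c)\setminus N(c)$, delete black edges on $c$ and isolated vertices; realizing $c^-$ ($c$ active, $D(c)\subseteq N(c)$): delete all edges on $c$ and isolated vertices. An active character red-adjacent to all species is free. A c-reduction $\langle c_1^+,\dots,c_k^+\rangle$ is successful if realizing the characters in order is always defined (realizing negatively each character right after it becomes free) and yields the empty graph. A red-black graph is reducible if it is connected and admits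 a successful reduction (i.e. is solved by some persistent phylogeny). Standing assumption: no free, null (isolated) or universal (inactive and black-adjacent to all species) characters, no species with no characters, no two identical character columns. An inactive character $c$ is maximal if no inactive $c'$ has $S(c)\subsetneq S(c')$. A maximal reducible graph is a reducible red-black graph all of whose characters are inactive and maximal. Trees. A path is simple if its internal nodes have in- and out-degree one. A line-tree is a tree consisting of a single simple path. A branch-tree is a tree consisting of a simple path from the root $r$ to a node $x$ which is the topmost node having more than one child, such that no positive character $c^+$ labels an edge below $x$; $x$ is the branch-node and the path from $r$ to $x$ is the initial path. *)

From mathcomp Require Import all_boot.

Set Implicit Arguments.
Unset Strict Implicit.
Unset Printing Implicit Defensive.

(* A red-black graph is given by its set of edges (pairs (s,c)) and by its  *)
(* set of active characters.  An edge (s,c) is red iff c is active and      *)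
(* black otherwise, so every character is incident only to black edges     *)
(* (inactive) or only to red edges (active).  The vertices of the graph are *)
(* the non-isolated species and characters (isolated vertices are always    *)
(* deleted).                                                                 *)

Section RedBlack.
Variables (S C : finType).

Record rbgraph := RBGraph { rb_edges : {set S * C}; rb_active : {set C} }.

Implicit Types (G : rbgraph) (s : S) (c : C).

Definition rb_edge G s c : bool := (s, c) \in rb_edges G.
Definition red_edge G s c : bool := rb_edge G s c && (c \in rb_active G).
Definition black_edge G s c : bool := rb_edge G s c && (c \notin rb_active G).

Definition species_vertex G s : bool := [exists c, rb_edge G s c].
Definition char_vertex G c : bool := [exists s, rb_edge G s c].

Definition rb_adj G : rel (S + C) := fun u v =>
  match u, v with
  | inl s, inr c => rb_edge G s c
  | inr c, inl s => rb_edge G s c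
  | _, _ => false
  end.

Definition is_vertex G (u : S + C) : bool :=
  match u with inl s => species_vertex G s | inr c => char_vertex G c end.

Definition rb_connected G : Prop :=
  forall u v, is_vertex G u -> is_vertex G v -> connect (rb_adj G) u v.

Definition rbN G c : {set S} := [set s | rb_edge G s c].
Definition rbD G c : {set S} := [set s | connect (rb_adj G) (inr c) (inl s)].

Definition assoc_matrix G s c : bool :=
  black_edge G s c || ((c \in rb_active G) && ~~ rb_edge G s c).

Definition Sc G c : {set S} := [set s | assoc_matrix G s c].

Definition inactive G c : bool := char_vertex G c && (c \notin rb_active G).
Definition active G c : bool := char_vertex G c && (c \in rb_active G).

Definition free G c : bool :=
  active G c && [forall s, species_vertex G s ==> red_edge G s c].

Definition realize_pos G c : rbgraph :=
  RBGraph ([set e in rb_edges G | e.2 != c] :|: [set (s, c) | s in rbD G c :\: rbN G c])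
          (c |: rb_active G).

(* realizing c^- (c active with D(c) \subset N(c)) *)
Definition realize_neg G c : rbgraph :=
  RBGraph [set e in rb_edges G | e.2 != c] (rb_active G :\ c).

(* realizing negatively all the currently free characters (this is
   order-independent), iterated until no character is free *)
Definition free_set G : {set C} := [set c | free G c].
Definition remove_free G : rbgraph :=
  RBGraph [set e in rb_edges G | e.2 \notin free_set G] (rb_active G :\: free_set G).
Definition close_free G : rbgraph := iter #|C| remove_free G.

Definition reduction_step (oG : option rbgraph) c : option rbgraph :=
  if oG is Some G then
    if inactive G c then Some (close_free (realize_pos G c)) else None
  else None.

Definition successful_reduction G (r : seq C) : bool :=
  if foldl reduction_step (Some G) r is Some G' then rb_edges G' == set0 else false.

Definition reducible G : Prop :=
  rb_connected G /\ exists r : seq C, successful_reduction G r.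

Definition standing_assumptions G : Prop :=
  [/\ forall c, ~~ free G c,
      forall c, char_vertex G c,
      forall c, c \notin rb_active G ->
        ~~ [forall s, species_vertex G s ==> black_edge G s c],
      forall s, species_vertex G s
    & forall c c', (forall s, assoc_matrix G s c = assoc_matrix G s c') -> c = c'].

Definition maximal_char G c : bool :=
  inactive G c && [forall c', inactive G c' ==> ~~ (Sc G c \proper Sc G c')].

Definition maximal_reducible G : Prop :=
  [/\ reducible G, forall c, inactive G c & forall c, maximal_char G c].

End RedBlack.

(* The edges are the pairs (tpar v, v) with v <> root.                       *)

Record rtree (V : finType) := RTree {
  troot : V;
  tpar : V -> V;
  tpar_root : tpar troot = troot;
  t_to_root : forall v, exists n, iter n tpar v = troot
}.

Section Trees.
Variables (C V : finType) (T : rtree V) (l : V -> {set C}).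

Definition anc (u v : V) : Prop := exists n, iter n (tpar T) v = u.

Definition is_edge (v : V) : bool := v != troot T.

Definition changes (v : V) (c : C) : bool :=
  is_edge v && ((c \in l v) != (c \in l (tpar T v))).
Definition gain (v : V) (c : C) : bool :=
  [&& is_edge v, c \notin l (tpar T v) & c \in l v].
Definition loss (v : V) (c : C) : bool :=
  [&& is_edge v, c \in l (tpar T v) & c \notin l v].

(* persistent phylogeny for (M, A); the state of node x is l x (the set of
   characters with value 1).  Every edge carries at least one label. *)
Definition persistent_phylogeny {S : finType} (M : S -> C -> bool) (A : {set C}) : Prop :=
  [/\ l (troot T) = A,
      forall v, is_edge v -> exists c, changes v c,
      forall c, #|[set v | changes v c]| <= 2,
      forall c u w, changes u c -> changes w c -> u != w ->
        (anc u w /\ gain u c /\ loss w c) \/ (anc w u /\ gain w c /\ loss u c)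
    & forall s, exists x, forall c, M s c = (c \in l x)].

Definition children (x : V) : {set V} := [set v | is_edge v & tpar T v == x].

Definition line_tree : Prop := forall x, #|children x| <= 1.

Definition branch_tree : Prop :=
  exists x, [/\ 1 < #|children x|,
                forall y, anc y x -> y != x -> #|children y| <= 1
              & forall v c, is_edge v -> anc x (tpar T v) -> ~~ gain v c].

End Trees.

Definition solves (S C V : finType) (T : rtree V) (l : V -> {set C}) (G : rbgraph S C) : Prop :=
  persistent_phylogeny T l (assoc_matrix G) (rb_active G).

From mathcomp Require Import all_boot.
From Stdlib Require Import Classical.

Set Implicit Arguments.
Unset Strict Implicit.
Unset Printing Implicit Defensive.

(* All characters are inactive, so the root has the empty state and every
   character is gained on at most one edge and lost on at most one edge below
   it.  Maximality forbids nested states: if every node carrying c also carried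
   e <> c, then S(c) would be contained in S(e), properly since columns are
   distinct, against the maximality of c.  Hence if c is gained in the subtree of a child z of x and e is
   present at x, then e is lost inside that subtree.
   Let x have two children z1, z2, suppose c is gained below z1, and let d
   label the edge into z2.  If d is lost there, d is present at x, so it is
   also lost below z1, against the uniqueness of losses.  If d is gained there,
   the same argument on both sides empties the state of x; then a species
   adjacent to a character gained below z1 is realised below z1, and each of
   its characters, absent at x, is gained below z1 as well.  By connectivity of
   G this reaches d, a contradiction.  So nothing is gained below a branching
   node, and the topmost branching node, if any, makes T a branch-tree. *)

Section Ancestry.
Variables (V : finType) (T : rtree V).
Local Notation par := (tpar T).
Local Notation root := (troot T).
Local Notation anc := (anc T).

Lemma iter_tpar_root n : iter n par root = root.
Proof. by elim: n => //= n ->; rewrite tpar_root. Qed.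

Lemma anc_refl u : anc u u. Proof. by exists 0. Qed.

Lemma anc_trans u w y : anc u w -> anc w y -> anc u y.
Proof. by move=> [a Ha] [b Hb]; exists (a + b); rewrite iterD Hb. Qed.

Lemma anc_tpar y : anc (par y) y. Proof. by exists 1. Qed.

Lemma anc_tparW u y : anc u (par y) -> anc u y.
Proof. by move/anc_trans; apply; apply: anc_tpar. Qed.

Lemma iter_tpar_cycle n y : iter n.+1 par y = y -> y = root.
Proof.
move=> cyc; have [N HN] := t_to_root T y.
have iter_cyc k : iter (k * n.+1) par y = y.
  by elim: k => // k IH; rewrite mulSn iterD IH cyc.
have leN : N <= N * n.+1 by rewrite leq_pmulr.
by rewrite -(iter_cyc N) -(subnK leN) iterD HN iter_tpar_root.
Qed.

Lemma edge_not_anc_tpar v : is_edge T v -> ~ anc v (par v).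
Proof.
move=> /eqP v_edge [n]; rewrite -iterSr => /iter_tpar_cycle.
exact: v_edge.
Qed.

Lemma anc_strict u y : anc u y -> u != y -> anc u (par y).
Proof.
move=> [[|n] Hn] neq_uy; first by rewrite -Hn eqxx in neq_uy.
by exists n; rewrite -iterSr.
Qed.

Lemma anc_total a b y : anc a y -> anc b y -> anc a b \/ anc b a.
Proof.
move=> [i Hi] [j Hj]; case: (leqP i j) => Hij.
  by right; exists (j - i); rewrite -Hi -iterD subnK.
by left; exists (i - j); rewrite -Hj -iterD subnK // ltnW.
Qed.

Lemma strict_anc_depth n x y : iter n par x = root -> anc y x -> y != x ->
  exists2 m, m < n & iter m par y = root.
Proof.
move=> Hn [[|k] Hk] neq_yx; first by rewrite -Hk eqxx in neq_yx.
case: (leqP k.+1 n) => Hkn.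
  exists (n - k.+1); first by rewrite ltn_subrL (leq_trans _ Hkn).
  by rewrite -Hk -iterD subnK.
have y_root : y = root by rewrite -Hk -(subnK (ltnW Hkn)) iterD Hn iter_tpar_root.
case: n Hn {Hkn} => [|n] Hn; last by exists 0.
by rewrite /= in Hn; rewrite Hn y_root eqxx in neq_yx.
Qed.

Lemma exists_topmost (P : V -> Prop) x0 : P x0 ->
  exists x, P x /\ forall y, anc y x -> y != x -> ~ P y.
Proof.
have [n] := t_to_root T x0; elim/ltn_ind: n x0 => n IH x0 Hn Px0.
case: (classic (exists y, [/\ anc y x0, y != x0 & P y])) =>
  [[y [Ay neq_y Py]]|none].
  by have [m ltmn Hm] := strict_anc_depth Hn Ay neq_y; apply: IH Hm Py.
by exists x0; split => // y Ay neq_y Py; apply: none; exists y.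
Qed.

Lemma child_anc x v : anc x (par v) -> is_edge T v ->
  exists2 z, z \in children T x & anc z v.
Proof.
move=> [n]; elim: n v => [|n IH] v /= Hn v_edge.
  by exists v; rewrite ?inE ?v_edge ?Hn ?eqxx //; apply: anc_refl.
have [par_x|par_nx] := eqVneq (par v) x.
  by exists v; rewrite ?inE ?v_edge ?par_x ?eqxx //; apply: anc_refl.
have pv_edge : is_edge T (par v).
  rewrite /is_edge; apply: contra par_nx => /eqP pv_root.
  by rewrite -Hn pv_root -iterS iter_tpar_root.
have [|z Hz Azp] := IH (par v) _ pv_edge; first by rewrite -iterSr.
by exists z => //; apply: anc_tparW.
Qed.

Lemma child_anc_tpar x z y : z \in children T x -> anc z y -> anc x (par y).
Proof.
rewrite inE => /andP [_ /eqP <-] [n Hn].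
by exists n; rewrite -iterSr iterS Hn.
Qed.

Lemma child_anc_uniq x z1 z2 y : z1 \in children T x -> z2 \in children T x ->
  anc z1 y -> anc z2 y -> z1 = z2.
Proof.
wlog A12 : z1 z2 / anc z1 z2 => [hwlog Hz1 Hz2 A1 A2|].
  case: (anc_total A1 A2) => [A12|A21]; first exact: hwlog.
  by apply/esym/hwlog.
rewrite !inE => /andP [E1 /eqP P1] /andP [_ /eqP P2] _ _.
have [//|neq12] := eqVneq z1 z2.
by case: (edge_not_anc_tpar E1); rewrite P1 -P2; apply: anc_strict.
Qed.

Lemma anc_crossing_edge (P : pred V) u y : anc u y -> ~~ P u -> P y ->
  exists w, [/\ is_edge T w, ~~ P (par w), P w, anc u (par w) & anc w y].
Proof.
move=> [n]; elim: n y => [|n IH] y /= Hn Pu Py; first by rewrite -Hn Py in Pu.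
have [Ppy|nPpy] := boolP (P (par y)).
  have [|w [Ew Pw1 Pw2 Aw Awy]] := IH (par y) _ Pu Ppy; first by rewrite -iterSr.
  by exists w; split => //; apply: anc_tparW.
exists y; split => //; last exact: anc_refl.
  by apply: contraNneq nPpy => y_root; rewrite y_root tpar_root -y_root.
by exists n; rewrite -iterSr.
Qed.

End Ancestry.

Section Persistence.
Variables (S C V : finType) (T : rtree V) (l : V -> {set C}).
Variables (M : S -> C -> bool) (A : {set C}).
Hypothesis phylo : persistent_phylogeny T l M A.
Local Notation par := (tpar T).
Local Notation anc := (anc T).
Local Notation gain := (gain T l).
Local Notation loss := (loss T l).
Local Notation changes := (changes T l).

Lemma changes_gain_or_loss v c : changes v c = gain v c || loss v c.
Proof. by rewrite /changes /gain /loss; case: (is_edge T v); do 2 case: (_ \in _). Qed.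

Lemma gain_changes v c : gain v c -> changes v c.
Proof. by rewrite changes_gain_or_loss => ->. Qed.

Lemma loss_changes v c : loss v c -> changes v c.
Proof. by rewrite changes_gain_or_loss orbC => ->. Qed.

Lemma gain_loss_excl v c : gain v c -> loss v c -> False.
Proof. by case/and3P => _ _ cv /and3P [_ _]; rewrite cv. Qed.

Lemma persistent_changes c u w : changes u c -> changes w c -> u != w ->
  (anc u w /\ gain u c /\ loss w c) \/ (anc w u /\ gain w c /\ loss u c).
Proof. by case: phylo => _ _ _ pers _; apply: pers. Qed.

Lemma gain_uniq u w c : gain u c -> gain w c -> u = w.
Proof.
move=> Gu Gw; have [//|neq] := eqVneq u w.
have [[_ [_ Lw]]|[_ [_ Lu]]] :=
  persistent_changes (gain_changes Gu) (gain_changes Gw) neq.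
  by case: (gain_loss_excl Gw Lw).
by case: (gain_loss_excl Gu Lu).
Qed.

Lemma loss_uniq u w c : loss u c -> loss w c -> u = w.
Proof.
move=> Lu Lw; have [//|neq] := eqVneq u w.
have [[_ [Gu _]]|[_ [Gw _]]] :=
  persistent_changes (loss_changes Lu) (loss_changes Lw) neq.
  by case: (gain_loss_excl Gu Lu).
by case: (gain_loss_excl Gw Lw).
Qed.

Lemma gain_loss_anc u w c : gain u c -> loss w c -> anc u w.
Proof.
move=> Gu Lw; have [eq_uw|neq] := eqVneq u w.
  by rewrite -eq_uw in Lw; case: (gain_loss_excl Gu Lw).
have [[Auw _]//|[_ [Gw _]]] :=
  persistent_changes (gain_changes Gu) (loss_changes Lw) neq.
by case: (gain_loss_excl Gw Lw).
Qed.

Lemma gain_anc v c y : c \notin A -> gain v c -> c \in l y -> anc v y.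
Proof.
move=> cA Gv cy; have root_c : c \notin l (troot T) by case: phylo => ->.
have [w [Ew ncpw cw _ Awy]] :=
  anc_crossing_edge (P := fun y => c \in l y) (t_to_root T y) root_c cy.
have Gw : gain w c by rewrite /gain Ew ncpw cw.
by rewrite (gain_uniq Gv Gw).
Qed.

Lemma gain_notin_anc v c x : gain v c -> anc x (par v) -> c \notin l x.
Proof.
move=> Gv Axpv; apply/negP => cx; have /and3P [Ev ncpv _] := Gv.
have cx' : ~~ (c \notin l x) by rewrite cx.
have [w [Ew cpw ncw _ Awpv]] :=
  anc_crossing_edge (P := fun y => c \notin l y) Axpv cx' ncpv.
have Lw : loss w c by rewrite /loss Ew (negbNE cpw) ncw.
exact: edge_not_anc_tpar Ev (anc_trans (gain_loss_anc Gv Lw) Awpv).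
Qed.

Lemma persist_in_subtree t c e z : c \notin A -> gain t c -> anc z t ->
    e \in l z -> (forall w, anc z w -> ~~ loss w e) ->
  forall y, c \in l y -> e \in l y.
Proof.
move=> cA Gt Azt ez no_loss y cy; apply: contraT => ney.
have Azy := anc_trans Azt (gain_anc cA Gt cy).
have ez' : ~~ (e \notin l z) by rewrite ez.
have [w [Ew epw new Azpw _]] :=
  anc_crossing_edge (P := fun y => e \notin l y) Azy ez' ney.
by move: (no_loss w (anc_tparW Azpw)); rewrite /loss Ew (negbNE epw) new.
Qed.

Lemma gain_in_subtree x z y e : z \in children T x -> anc z y ->
  e \notin l x -> e \in l y -> exists2 w, gain w e & anc z w.
Proof.
move=> Hz Azy nex ey; have Axz : anc x z.
  by move: Hz; rewrite inE => /andP [_ /eqP <-]; apply: anc_tpar.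
have [w [Ew nepw ew Axpw Awy]] :=
  anc_crossing_edge (P := fun y => e \in l y) (anc_trans Axz Azy) nex ey.
have [z' Hz' Az'w] := child_anc Axpw Ew.
exists w; first by rewrite /gain Ew nepw ew.
by rewrite (child_anc_uniq Hz Hz' Azy (anc_trans Az'w Awy)).
Qed.

End Persistence.

Lemma connect_preserves (T : finType) (e : rel T) (P : T -> Prop) u v :
  (forall a b, P a -> e a b -> P b) -> connect e u v -> P u -> P v.
Proof.
move=> Pe /connectP [p ep ->]; elim: p u ep => //= b p IH a /andP [eab ep] Pa.
exact: IH ep (Pe _ _ Pa eab).
Qed.

Lemma maximal_char_Sc_subset (S C : finType) (G : rbgraph S C) c e :
    (forall c c', (forall s, assoc_matrix G s c = assoc_matrix G s c') -> c = c') ->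
    maximal_char G c -> inactive G e -> Sc G c \subset Sc G e -> c = e.
Proof.
move=> distinct /andP [_ /forallP /(_ e) /implyP not_proper] ine sub.
have /eqP /setP eqS : Sc G c == Sc G e by rewrite eqEproper sub not_proper.
by apply: distinct => s; move: (eqS s); rewrite !inE.
Qed.

Section MaximalReducible.
Variables (S C V : finType) (G : rbgraph S C) (T : rtree V) (l : V -> {set C}).
Hypotheses (std : standing_assumptions G) (maxred : maximal_reducible G).
Hypothesis sol : solves T l G.
Local Notation par := (tpar T).
Local Notation anc := (anc T).
Local Notation gain := (gain T l).
Local Notation loss := (loss T l).

Lemma inactive_char c : c \notin rb_active G.
Proof. by case: maxred => _ /(_ c) /andP []. Qed.

Lemma assoc_inactive s c : assoc_matrix G s c = rb_edge G s c.
Proof.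
by rewrite /assoc_matrix /black_edge (negbTE (inactive_char c)) andbT orbF.
Qed.

Lemma state_incl_eq c e : (forall y, c \in l y -> e \in l y) -> c = e.
Proof.
move=> incl; case: std => _ _ _ _ distinct; case: maxred => _ inact maxc.
apply: maximal_char_Sc_subset distinct (maxc c) (inact e) _.
apply/subsetP => s; rewrite !inE; case: sol => _ _ _ _ /(_ s) [y realized].
by rewrite !realized; apply: incl.
Qed.

Lemma lost_below_child x z t c e : z \in children T x -> anc z t -> gain t c ->
  e \in l x -> exists2 w, anc z w & loss w e.
Proof.
move=> Hz Azt Gt ex; have ncx := gain_notin_anc sol Gt (child_anc_tpar Hz Azt).
move: Hz; rewrite inE => /andP [Ez /eqP pz].
have [ez|nez] := boolP (e \in l z); last first.
  by exists z; [apply: anc_refl | rewrite /loss Ez pz ex nez].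
apply: NNPP => no_loss; case/negP: ncx; rewrite (state_incl_eq (c := c) (e := e)) //.
apply: (persist_in_subtree sol (inactive_char c) Gt Azt ez) => w Azw.
by apply/negP => Lw; apply: no_loss; exists w.
Qed.

Lemma state_empty_of_two_gains x z1 z2 t1 t2 c1 c2 :
    z1 \in children T x -> z2 \in children T x -> z1 != z2 ->
    anc z1 t1 -> gain t1 c1 -> anc z2 t2 -> gain t2 c2 ->
  l x = set0.
Proof.
move=> Hz1 Hz2 neq12 A1 G1 A2 G2; apply/setP => e; rewrite inE.
apply/negP => ex; case/negP: neq12.
have [w1 A1w L1] := lost_below_child Hz1 A1 G1 ex.
have [w2 A2w L2] := lost_below_child Hz2 A2 G2 ex.
by rewrite (loss_uniq sol L1 L2) in A1w; rewrite (child_anc_uniq Hz1 Hz2 A1w A2w).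
Qed.

Lemma connect_gain_in_subtree x z c d : l x = set0 -> z \in children T x ->
    connect (rb_adj G) (inr c) (inr d) ->
  (exists2 w, gain w c & anc z w) -> exists2 w, gain w d & anc z w.
Proof.
move=> lx0 Hz conn.
pose below e := exists2 w, gain w e & anc z w.
pose P (u : S + C) :=
  match u with inl s => forall e, rb_edge G s e -> below e | inr e => below e end.
have step a b : P a -> rb_adj G a b -> P b.
  case: a b => [s|e] [s'|e'] //= Pa adj; first exact: Pa.
  move=> e' adj'; have [w Gw Azw] := Pa.
  have [_ _ _ _ /(_ s') [y realized]] := sol.
  have ey : e \in l y by rewrite -realized assoc_inactive.
  have e'y : e' \in l y by rewrite -realized assoc_inactive.
  have Azy := anc_trans Azw (gain_anc sol (inactive_char e) Gw ey).
  by apply: gain_in_subtree Hz Azy _ e'y; rewrite lx0 inE.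
exact: (connect_preserves step conn).
Qed.

Lemma no_gain_below_branch x z1 z2 v c : z1 \in children T x ->
  z2 \in children T x -> z1 != z2 -> anc z1 v -> ~~ gain v c.
Proof.
move=> Hz1 Hz2 neq12 Az1v; apply/negP => Gv.
have E2 : is_edge T z2 by move: Hz2; rewrite inE => /andP [].
have [d] : exists d, changes T l z2 d by case: sol => _ label _ _ _; apply: label.
rewrite changes_gain_or_loss => /orP [Gd|Ld].
  have lx0 := state_empty_of_two_gains Hz1 Hz2 neq12 Az1v Gv (anc_refl T z2) Gd.
  have conn : connect (rb_adj G) (inr c) (inr d).
    case: maxred => -[conn _] _ _; case: std => _ vert _ _ _.
    by apply: conn; apply: vert.
  have [w Gw A1w] := connect_gain_in_subtree lx0 Hz1 conn (ex_intro2 _ _ v Gv Az1v).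
  rewrite (gain_uniq sol Gw Gd) in A1w.
  by case/negP: neq12; rewrite (child_anc_uniq Hz1 Hz2 A1w (anc_refl T z2)).
have dx : d \in l x.
  by move: Hz2 Ld; rewrite inE => /andP [_ /eqP <-] /and3P [].
have [w A1w Lw] := lost_below_child Hz1 Az1v Gv dx.
rewrite (loss_uniq sol Lw Ld) in A1w.
by case/negP: neq12; rewrite (child_anc_uniq Hz1 Hz2 A1w (anc_refl T z2)).
Qed.

End MaximalReducible.

Theorem lemma2 (S C : finType) (G : rbgraph S C)
  (V : finType) (T : rtree V) (l : V -> {set C}) :
  standing_assumptions G ->
  maximal_reducible G ->
  solves T l G ->
  line_tree T \/ branch_tree T l.
Proof.
move=> std maxred sol.
have [/existsP [x0 branch0]|/existsPn linear] :=
  boolP [exists x, 1 < #|children T x|]; last first.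
  by left => x; rewrite leqNgt linear.
have [x [branch topmost]] :=
  exists_topmost T (P := fun x => 1 < #|children T x|) branch0.
right; exists x; split => [//| y Ayx neq_yx | v c Ev Axpv].
  by rewrite leqNgt; apply/negP; apply: topmost.
have [z1 Hz1 Az1v] := child_anc Axpv Ev.
have [z2 Hz2 neq12] : exists2 z2, z2 \in children T x & z1 != z2.
  have [a [b [Ha Hb neq_ab]]] := card_gt1P branch.
  by case: (eqVneq a z1) => [<-|]; [exists b | exists a; rewrite // eq_sym].
exact: (no_gain_below_branch std maxred sol c Hz1 Hz2 neq12 Az1v).
Qed.
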